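(* For every integer $n\ge0$, $$\mathfrak{C}_n(x)=\sum_{k=0}^{n}k!\,x^k\sum_{j=0}^{n}\binom nj\left(-\frac k2\right)^j S(n-j,k),$$ where $S(m,k)$ denotes the Stirling numbers of the second kind (with $S(m,k)=0$ for $k>m$).
   Context: For $n\ge1$ the central factorial is $x^{[n]}=x\,(x+\tfrac n2-1)(x+\tfrac n2-2)\cdots(x-\tfrac n2+1)$ (a product of $n$ factors), and $x^{[0]}=1$. The central factorial numbers of the second kind $T(n,k)$ ($0\le k\le n$) are defined by $x^n=\sum_{k=0}^n T(n,k)\,x^{[k]}$; equivalently $T(n,k)=\frac1{k!}\sum_{j=0}^k(-1)^j\binom kj\left(\frac k2-j\right)^n$, and $T(n,k)=0$ for $k>n$. The $n$th central Fubini-like polynomial is $\mathfrak{C}_n(x)=\sum_{k=0}^n k!\,T(n,k)\,x^k$. Stirling numbers of the second kind are defined by $x^n=\sum_k S(n,k)\,x(x-1)\cdots(x-k+1)$. *)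

From HB Require Import structures.
From mathcomp Require Import all_boot all_order all_algebra.
Set Implicit Arguments. Unset Strict Implicit. Unset Printing Implicit Defensive.
Import Order.TTheory GRing.Theory Num.Theory.
Local Open Scope ring_scope.

Definition cfT (n k : nat) : rat :=
  (k`!%:R)^-1 * \sum_(j < k.+1) (-1) ^+ j * ('C(k, j))%:R * ((k%:R / 2%:R) - j%:R) ^+ n.

Fixpoint stirling2 (n k : nat) : nat :=
  match n, k with
  | 0, 0 => 1
  | 0, _.+1 => 0
  | _.+1, 0 => 0
  | n'.+1, k'.+1 => k'.+1 * stirling2 n' k'.+1 + stirling2 n' k'
  end.

Definition centralFubini (n : nat) : {poly rat} :=
  \sum_(k < n.+1) ((k`!%:R * cfT n k) *: 'X^k).

(** The alternating sum [\sum_i (-1)^i C(k,i) (k - i)^m] satisfies the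
    recurrence of [k! S(m,k)] (Pascal's rule on [C(k+1,i)] together with
    [C(k+1,i) (k+1-i) = (k+1) C(k,i)]), so it equals [k! S(m,k)].  Expanding
    [(k/2 - i)^n = ((k - i) - k/2)^n] binomially in the explicit formula for
    [T(n,k)] and exchanging the two sums then turns [k! T(n,k)] into
    [\sum_j C(n,j) (-k/2)^j k! S(n-j,k)], coefficientwise in [x^k]. *)

From HB Require Import structures.
From mathcomp Require Import all_boot all_order all_algebra.
From mathcomp Require Import ring.
Import Order.TTheory GRing.Theory Num.Theory.
Local Open Scope ring_scope.

Section SurjectionCount.

Variable R : comPzRingType.

(* The number of surjections from an [m]-set onto a [k]-set, by inclusion-exclusion. *)
Definition surj_count (m k : nat) : R :=
  \sum_(i < k.+1) (-1) ^+ i * 'C(k, i)%:R * (k%:R - i%:R) ^+ m.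

Lemma surj_count_pascal m k :
  surj_count m k.+1 + surj_count m k =
  \sum_(i < k.+1) (-1) ^+ i * 'C(k, i)%:R * (k.+1%:R - i%:R) ^+ m.
Proof.
have top0 : \sum_(i < k.+2) (-1) ^+ i * 'C(k, i)%:R * (k.+1%:R - i%:R) ^+ m =
            \sum_(i < k.+1) (-1) ^+ i * 'C(k, i)%:R * (k.+1%:R - i%:R) ^+ m :> R.
  by rewrite big_ord_recr /= bin_small // mulr0 mul0r addr0.
rewrite -top0 big_ord_recl /= /surj_count big_ord_recl /=.
under eq_bigr => i _ do rewrite /bump /= binS natrD mulrDr mulrDl.
rewrite big_split /= !bin0 -!addrA; congr (_ + _).
have -> : \sum_(i < k.+1) (-1) ^+ (1 + i) * 'C(k, i)%:R * (k.+1%:R - (1 + i)%:R) ^+ m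
          = - surj_count m k.
  rewrite /surj_count -sumrN; apply: eq_bigr => i _.
  have -> : k.+1%:R - (1 + i)%:R = k%:R - i%:R :> R by rewrite natrD !mulrS; ring.
  by rewrite exprS; ring.
by rewrite addNr addr0.
Qed.

Lemma surj_countSS m k :
  surj_count m.+1 k.+1 = k.+1%:R * (surj_count m k.+1 + surj_count m k).
Proof.
rewrite surj_count_pascal /surj_count big_ord_recr /= subrr expr0n mulr0 addr0.
rewrite mulr_sumr; apply: eq_bigr => i _.
have i_le : (i <= k.+1)%N by rewrite ltnW // ltnS ltn_ord.
have absorb : 'C(k.+1, i)%:R * (k.+1%:R - i%:R) = k.+1%:R * 'C(k, i)%:R :> R.
  by rewrite -natrB // -!natrM mulnC -mul_bin_down.
rewrite exprS; transitivity
  ((-1) ^+ i * (k.+1%:R - i%:R) ^+ m * ('C(k.+1, i)%:R * (k.+1%:R - i%:R)) : R).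
  by ring.
by rewrite absorb; ring.
Qed.

Lemma surj_countE m k : surj_count m k = (k`! * stirling2 m k)%:R.
Proof.
elim: m k => [|m IHm] [|k].
- by rewrite /surj_count big_ord1 expr0 !mulr1.
- rewrite /surj_count muln0.
  (* [(1 - 1)^(k+1) = 0] expanded binomially. *)
  have := exprDn (1 : R) (-1) k.+1.
  rewrite subrr expr0n /= => /esym <-.
  by apply: eq_bigr => i _; rewrite expr1n mul1r expr0 mulr1 mulr_natr.
- by rewrite /surj_count big_ord1 subrr expr0n mulr0 muln0.
- by rewrite surj_countSS !IHm /= factS -!natrD -!natrM; congr _%:R; ring.
Qed.

Lemma shifted_alternating_sum c n k :
  \sum_(i < k.+1) (-1) ^+ i * 'C(k, i)%:R * (k%:R - i%:R + c) ^+ n =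
  \sum_(j < n.+1) 'C(n, j)%:R * c ^+ j * surj_count (n - j) k.
Proof.
under eq_bigr => i _ do rewrite exprDn mulr_sumr.
rewrite exchange_big /=; apply: eq_bigr => j _.
rewrite /surj_count mulr_sumr; apply: eq_bigr => i _.
by rewrite -mulr_natl; ring.
Qed.

End SurjectionCount.

Lemma fact_mul_cfT n k :
  k`!%:R * cfT n k =
  k`!%:R * \sum_(j < n.+1) 'C(n, j)%:R * (- (k%:R / 2%:R)) ^+ j * (stirling2 (n - j) k)%:R.
Proof.
have fact_neq0 : k`!%:R != 0 :> rat by rewrite pnatr_eq0 -lt0n fact_gt0.
rewrite /cfT mulrA mulfV // mul1r.
have recentre (i : nat) : k%:R / 2%:R - i%:R = k%:R - i%:R + - (k%:R / 2%:R) :> rat.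
  by rewrite addrAC {2}[k%:R](splitr (k%:R : rat)) addrK.
under eq_bigr => i _ do rewrite recentre.
rewrite shifted_alternating_sum mulr_sumr; apply: eq_bigr => j _.
by rewrite surj_countE natrM; ring.
Qed.

Theorem theorem3 (n : nat) :
  centralFubini n =
  \sum_(k < n.+1)
     ((k`!%:R * \sum_(j < n.+1)
          ('C(n, j))%:R * (- (k%:R / 2%:R)) ^+ j * (stirling2 (n - j) k)%:R : rat)
      *: 'X^k).
Proof. by apply: eq_bigr => k _; rewrite fact_mul_cfT. Qed.
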